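(* Let $V$ be a nonempty set, $E\subset V\times V$, $W\subset V$, $W^c=V\setminus W$. Then $$\Delta_{W^c}\,R_W^-\,(E_W^{-1})^*(E_W)^*\,R_W\,\Delta_{W^c}=\Delta_{W^c}\,A_W\,\Delta_{W^c}.$$
   Context: Relations on $V$: composition $RR'$: $x(RR')y$ iff there is $z$ with $xRz$ and $zR'y$; $R^{-1}$ is the converse; $R^0=\Delta$, $R^{n+1}=RR^n$, $R^+=\bigcup_{k\ge1}R^k$, $R^*=\bigcup_{k\ge0}R^k$. For $S\subset V$, $\Delta_S=\{(x,x):x\in S\}$, $\Delta=\Delta_V$. Definitions: $E_W=\Delta_{W^c}E$; $B_W=E(E_W)^*$; $B_W^-=(B_W)^{-1}=(E_W^{-1})^*E^{-1}$; $K_W=B_W^-\Delta_{W^c}B_W$; $C_W=(\Delta_WK_W\Delta_W)^+\cup\Delta_W$; $A_W=\Delta\cup B_W\cup B_W^-\cup K_W\cup(B_W\cup K_W)\,C_W\,(B_W^-\cup K_W^{-1})$; $R_W=\Delta\cup C_W(B_W^-\cup K_W^{-1})$; $R_W^-=\Delta\cup(B_W\cup K_W)C_W$. *)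

From Stdlib Require Import Arith.

Definition relation (V : Type) := V -> V -> Prop.

Section Rel.
Context {V : Type}.

Definition rcomp (R R' : relation V) : relation V :=
  fun x y => exists z, R x z /\ R' z y.
Definition rconv (R : relation V) : relation V := fun x y => R y x.
Definition runion (R R' : relation V) : relation V := fun x y => R x y \/ R' x y.
Definition rdiag : relation V := fun x y => x = y.
Definition rdiagS (S : V -> Prop) : relation V := fun x y => S x /\ x = y.
Fixpoint rpow (R : relation V) (n : nat) : relation V :=
  match n with
  | O => rdiag
  | S n => rcomp R (rpow R n)
  end.
Definition rplus (R : relation V) : relation V :=
  fun x y => exists k, 1 <= k /\ rpow R k x y.
Definition rstar (R : relation V) : relation V :=
  fun x y => exists k, rpow R k x y.
Definition req (R R' : relation V) : Prop := forall x y, R x y <-> R' x y.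

Variables (E : relation V) (W : V -> Prop).

Definition Wc : V -> Prop := fun x => ~ W x.
Definition E_W : relation V := rcomp (rdiagS Wc) E.
Definition B_W : relation V := rcomp E (rstar E_W).
Definition B_W_minus : relation V := rcomp (rstar (rconv E_W)) (rconv E).
Definition K_W : relation V := rcomp B_W_minus (rcomp (rdiagS Wc) B_W).
Definition C_W : relation V :=
  runion (rplus (rcomp (rdiagS W) (rcomp K_W (rdiagS W)))) (rdiagS W).
Definition A_W : relation V :=
  runion rdiag (runion B_W (runion B_W_minus (runion K_W
    (rcomp (runion B_W K_W) (rcomp C_W (runion B_W_minus (rconv K_W))))))).
Definition R_W : relation V :=
  runion rdiag (rcomp C_W (runion B_W_minus (rconv K_W))).
Definition R_W_minus : relation V :=
  runion rdiag (rcomp (runion B_W K_W) C_W).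

End Rel.

(* Write P = (E_W)^*.  A path in E_W only leaves vertices of W^c, so
   P = Delta u Delta_{W^c} B_W, and the middle factor (E_W^{-1})^* (E_W)^* = P^{-1} P,
   which relates vertices with a common P-source, is contained in
   Delta u B_W u B_W^- u K_W.  C_W is the reflexive-transitive closure of
   Delta_W K_W Delta_W on W, so it is transitive and both ends of a C_W-pair lie in W.
   Once R_W^- or R_W contributes a C_W-factor, the adjacent end of the middle lies in W,
   the middle degenerates to a single B_W-, B_W^-- or K_W-step, and it is absorbed into
   the neighbouring factor or into C_W.  Conversely, every summand of A_W is such a
   chain with trivial factors. *)


Section Closures.
Context {V : Type}.
Implicit Types (R : relation V) (Q : V -> Prop).

Lemma rpow_add R m n x y z :
  rpow R m x y -> rpow R n y z -> rpow R (m + n) x z.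
Proof.
  revert x; induction m as [|m IH]; simpl; intros x Hxy Hyz.
  - unfold rdiag in Hxy; subst; exact Hyz.
  - destruct Hxy as [w [Hxw Hwy]]; exists w; eauto.
Qed.

Lemma rpow_Sr R n x y : rpow R (S n) x y <-> rcomp (rpow R n) R x y.
Proof.
  revert x; induction n as [|n IH]; intros x.
  - simpl; unfold rcomp, rdiag; split.
    + intros [z [Hxz <-]]; exists x; auto.
    + intros [z [<- Hxy]]; exists y; auto.
  - split.
    + intros [w [Hxw Hwy]]; apply IH in Hwy; destruct Hwy as [z [Hwz Hzy]].
      exists z; split; [exists w|]; auto.
    + intros [z [[w [Hxw Hwz]] Hzy]]; exists w; split; [|apply IH; exists z]; auto.
Qed.

Lemma rpow_conv R n x y : rpow (rconv R) n x y <-> rpow R n y x.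
Proof.
  revert x y; induction n as [|n IH]; intros x y.
  - simpl; unfold rdiag; split; auto.
  - rewrite rpow_Sr; simpl; unfold rcomp, rconv.
    split; intros [z [Hz Hrest]]; exists z; split; auto; apply IH; auto.
Qed.

Lemma rstar_refl R x : rstar R x x.
Proof. exists 0; reflexivity. Qed.

Lemma rstar_trans R x y z : rstar R x y -> rstar R y z -> rstar R x z.
Proof. intros [m Hxy] [n Hyz]; exists (m + n); eapply rpow_add; eauto. Qed.

Lemma rstar_conv R x y : rstar (rconv R) x y <-> rstar R y x.
Proof. split; intros [k Hk]; exists k; apply rpow_conv; auto. Qed.

Lemma rstar_ind_invariant R Q x y :
  (forall u v, Q u -> R u v -> Q v) -> Q x -> rstar R x y -> Q y.
Proof.
  intros HQ Hx [k Hk]; revert x Hx Hk; induction k as [|k IH]; simpl; intros x Hx Hk.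
  - unfold rdiag in Hk; subst; exact Hx.
  - destruct Hk as [z [Hxz Hzy]]; eauto.
Qed.

Lemma rplus_union_rdiagS_iff R Q x y :
  runion (rplus (rcomp (rdiagS Q) R)) (rdiagS Q) x y
  <-> Q x /\ rstar (rcomp (rdiagS Q) R) x y.
Proof.
  split.
  - intros [[[|k] [Hk Hxy]]|[Hx <-]].
    + inversion Hk.
    + split; [|exists (S k); exact Hxy].
      destruct Hxy as [z [[u [[Hx <-] _]] _]]; exact Hx.
    + split; [exact Hx|apply rstar_refl].
  - intros [Hx [[|k] Hxy]].
    + right; split; auto.
    + left; exists (S k); split; [apply le_n_S, le_0_n|exact Hxy].
Qed.

Lemma rdiagS_sandwich_iff Q R x y :
  rcomp (rdiagS Q) (rcomp R (rdiagS Q)) x y <-> Q x /\ R x y /\ Q y.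
Proof.
  split.
  - intros [x' [[Hx <-] [y' [Hxy [Hy <-]]]]]; auto.
  - intros [Hx [Hxy Hy]]; exists x; split; [split; auto|].
    exists y; split; [exact Hxy|split; auto].
Qed.

End Closures.

Section Blocks.
Context {V : Type}.
Variables (E : relation V) (W : V -> Prop).

Local Notation P := (rstar (E_W E W)).
Local Notation B := (B_W E W).
Local Notation Bm := (B_W_minus E W).
Local Notation K := (K_W E W).
Local Notation C := (C_W E W).
Local Notation K_on_W := (rcomp (rdiagS W) (rcomp K (rdiagS W))).

Lemma rstar_E_W_iff x y : P x y <-> x = y \/ Wc W x /\ B x y.
Proof.
  split.
  - intros [[|k] Hk]; simpl in Hk.
    + left; exact Hk.
    + destruct Hk as [z [[x' [[Hx <-] Hxz]] Hzy]].
      right; split; [|exists z; split; [|exists k]]; auto.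
  - intros [<-|[Hx [z [Hxz [k Hzy]]]]].
    + apply rstar_refl.
    + exists (S k), z; split; auto; exists x; split; [split|]; auto.
Qed.

Lemma B_W_minus_iff x y : Bm x y <-> B y x.
Proof.
  unfold B_W_minus, B_W, rcomp, rconv.
  split; intros [z [Hz Hrest]]; exists z; split; auto; apply rstar_conv; auto.
Qed.

Lemma K_W_intro v x y : Wc W v -> B v x -> B v y -> K x y.
Proof.
  intros Hv Hvx Hvy; exists v; split; [apply B_W_minus_iff; exact Hvx|].
  exists v; split; [split|]; auto.
Qed.

Lemma C_W_iff x y : C x y <-> W x /\ rstar K_on_W x y.
Proof. apply rplus_union_rdiagS_iff. Qed.

Lemma C_W_l x y : C x y -> W x.
Proof. intros Hxy; apply C_W_iff in Hxy; tauto. Qed.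

Lemma C_W_r x y : C x y -> W y.
Proof.
  intros Hxy; apply C_W_iff in Hxy; destruct Hxy as [Hx Hxy].
  refine (rstar_ind_invariant _ _ _ _ _ Hx Hxy).
  intros u v _ [u' [_ [v' [_ [Hv <-]]]]]; exact Hv.
Qed.

Lemma C_W_refl x : W x -> C x x.
Proof. intros Hx; apply C_W_iff; split; [exact Hx|apply rstar_refl]. Qed.

Lemma C_W_trans x y z : C x y -> C y z -> C x z.
Proof.
  rewrite !C_W_iff; intros [Hx Hxy] [_ Hyz]; split; [|eapply rstar_trans]; eauto.
Qed.

Lemma C_W_of_K_W x y : W x -> W y -> K x y -> C x y.
Proof.
  intros Hx Hy Hxy; apply C_W_iff; split; [exact Hx|].
  exists 1, y; split; [|reflexivity].
  exists x; split; [split|exists y; split; [|split]]; auto.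
Qed.

Lemma common_source_cases v x y :
  P v x -> P v y -> runion rdiag (runion B (runion Bm K)) x y.
Proof.
  rewrite !rstar_E_W_iff.
  intros [<-|[Hv Hvx]] [<-|[_ Hvy]].
  - left; reflexivity.
  - right; left; exact Hvy.
  - right; right; left; apply B_W_minus_iff; exact Hvx.
  - right; right; right; exact (K_W_intro v x y Hv Hvx Hvy).
Qed.

Lemma common_source_Wc_W v x y :
  Wc W x -> W y -> P v x -> P v y -> runion B K x y.
Proof.
  intros Hx Hy; rewrite !rstar_E_W_iff.
  intros [<-|[Hv Hvx]] [Hvy|[_ Hvy]].
  - subst; contradiction.
  - left; exact Hvy.
  - subst; contradiction.
  - right; exact (K_W_intro v x y Hv Hvx Hvy).
Qed.

Lemma common_source_W_W v x y : W x -> W y -> P v x -> P v y -> C x y.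
Proof.
  intros Hx Hy; rewrite !rstar_E_W_iff.
  intros [<-|[Hv Hvx]] [<-|[Hv' Hvy]].
  - apply C_W_refl; exact Hx.
  - contradiction.
  - contradiction.
  - apply C_W_of_K_W; auto; exact (K_W_intro v x y Hv Hvx Hvy).
Qed.

Lemma runion_B_W_K_W_conv x y : runion B K y x -> runion Bm (rconv K) x y.
Proof. intros [Hyx|Hyx]; [left; apply B_W_minus_iff|right]; exact Hyx. Qed.

Lemma A_W_of_chain x u v w y :
  Wc W x -> Wc W y -> R_W_minus E W x u -> P v u -> P v w -> R_W E W w y ->
  A_W E W x y.
Proof.
  intros Hx Hy [<-|[c [Hxc Hcu]]] Hvu Hvw [<-|[d [Hwd Hdy]]].
  - destruct (common_source_cases v x w Hvu Hvw) as [H|[H|[H|H]]];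
      [left|right; left|right; right; left|right; right; right; left]; exact H.
  - do 4 right; exists w; split.
    + exact (common_source_Wc_W v x w Hx (C_W_l _ _ Hwd) Hvu Hvw).
    + exists d; split; auto.
  - do 4 right; exists c; split; [exact Hxc|exists u; split; [exact Hcu|]].
    apply runion_B_W_K_W_conv, (common_source_Wc_W v); auto.
    exact (C_W_r _ _ Hcu).
  - do 4 right; exists c; split; [exact Hxc|exists d; split; [|exact Hdy]].
    apply (C_W_trans _ u); [exact Hcu|].
    apply (C_W_trans _ w); [|exact Hwd].
    exact (common_source_W_W v u w (C_W_r _ _ Hcu) (C_W_l _ _ Hwd) Hvu Hvw).
Qed.

Lemma chain_of_A_W x y :
  Wc W x -> Wc W y -> A_W E W x y ->
  exists u v w, R_W_minus E W x u /\ P v u /\ P v w /\ R_W E W w y.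
Proof.
  assert (HRm : forall z, R_W_minus E W z z) by (intros; left; reflexivity).
  assert (HR : forall z, R_W E W z z) by (intros; left; reflexivity).
  assert (HP : forall z, P z z) by (intros; apply rstar_refl).
  assert (HPB : forall z z', Wc W z -> B z z' -> P z z')
    by (intros z z' Hz Hzz'; apply rstar_E_W_iff; auto).
  intros Hx Hy [Hxy|[Hxy|[Hxy|[Hxy|[c [Hxc [d [Hcd Hdy]]]]]]]].
  - unfold rdiag in Hxy; subst y; exists x, x, x; split; [|split; [|split]]; auto.
  - exists x, x, y; split; [|split; [|split]]; auto.
  - apply B_W_minus_iff in Hxy; exists x, y, y; split; [|split; [|split]]; auto.
  - destruct Hxy as [v [Hvx [v' [[Hv <-] Hvy]]]]; apply B_W_minus_iff in Hvx.
    exists x, v, y; split; [|split; [|split]]; auto.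
  - exists c, c, c; split; [|split; [|split]]; auto.
    + right; exists c; split; [exact Hxc|apply C_W_refl, (C_W_l _ _ Hcd)].
    + right; exists d; split; auto.
Qed.

End Blocks.

Theorem lemma5 (V : Type) (HV : inhabited V) (E : relation V) (W : V -> Prop) :
  req
    (rcomp (rdiagS (Wc W))
      (rcomp (R_W_minus E W)
        (rcomp (rstar (rconv (E_W E W)))
          (rcomp (rstar (E_W E W))
            (rcomp (R_W E W) (rdiagS (Wc W)))))))
    (rcomp (rdiagS (Wc W)) (rcomp (A_W E W) (rdiagS (Wc W)))).
Proof.
  intros x y; rewrite rdiagS_sandwich_iff; split.
  - intros (x' & [Hx <-] & u & Hxu & v & Hvu & w & Hvw & y' & Hwy & Hy & <-).
    apply rstar_conv in Hvu.
    split; [|split]; eauto using A_W_of_chain.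
  - intros (Hx & Hxy & Hy).
    destruct (chain_of_A_W E W x y Hx Hy Hxy) as (u & v & w & Hxu & Hvu & Hvw & Hwy).
    exists x; split; [split; auto|].
    exists u; split; [exact Hxu|].
    exists v; split; [apply rstar_conv; exact Hvu|].
    exists w; split; [exact Hvw|].
    exists y; split; [exact Hwy|split; auto].
Qed.
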